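(* Let $\phi$ and $\psi$ be linear formulae on variable sets $\mathcal{V}_1$ and $\mathcal{V}_2$ respectively, and let $\mathsf r:\phi\to\psi$ be a linear inference. Then there is a linear inference $\mathsf r':\phi'\to\psi'$ with $\phi'$ and $\psi'$ linear formulae on $\mathcal{V}_1\cap\mathcal{V}_2$ such that $\mathsf r$ is $\{\mathsf{s},\mathsf{m},\mathsf r'\}$-derivable with units.
   Context: Fix a countably infinite set of variables. Linear formulae on a finite set $\mathcal{V}$ of variables are defined inductively: - $\top,\bot$ are linear formulae on $\emptyset$. - $x$ and $\neg x$ are linear formulae on $\{x\}$. - If $\phi$ is on $\mathcal{V}_1$, $\psi$ is on $\mathcal{V}_2$ and $\mathcal{V}_1\cap\mathcal{V}_2=\emptyset$, then $\phi\lor\psi$ and $\phi\land\psi$ are on $\mathcal{V}_1\cup\mathcal{V}_2$. Formulae are evaluated under Boolean assignments as usual. A linear inference $\phi\to\psi$ is a pair of linear formulae (possibly on different variable sets) such that every assignment satisfying $\phi$ satisfies $\psi$. A congruence is an equivalence relation closed under $\land$- and $\lor$-contexts on either side. - $\sim_{\mathsf{ac}}$ is the smallest congruence containing commutativity and associativity of $\land,\lor$. - $\sim_{\mathsf{u}}$ is the smallest congruence containing $\phi\land\top\sim\phi$, $\top\land\phi\sim\phi$, $\phi\lor\bot\sim\phi$, $\bot\lor\phi\sim\phi$, $\phi\land\bot\sim\bot$, $\bot\land\phi\sim\bot$, $\phi\lor\top\sim\top$, $\top\lor\phi\sim\top$. - $\sim_{\mathsf{acu}}$ is the smallest congruence containing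 both. For a set $S$ of linear inferences, $\to_S$ is the smallest relation containing $S$ and closed under substitution (of linear formulae for variables, keeping linearity) and contexts. Write $\phi\rightsquigarrow_{S\mathsf u}\psi$ if $\phi\sim_{\mathsf{acu}}\phi'\to_S\psi'\sim_{\mathsf{acu}}\psi$ for some $\phi',\psi'$. An inference $\phi\to\psi$ is $S$-derivable with units if $\phi,\psi$ are related by the reflexive-transitive closure of $\rightsquigarrow_{S\mathsf u}\cup\sim_{\mathsf{acu}}$. Switch $\mathsf{s}$ is $x\land(y\lor z)\to(x\land y)\lor z$; medial $\mathsf{m}$ is $(w\land x)\lor(y\land z)\to(w\lor y)\land(x\lor z)$. *)

From mathcomp Require Import all_boot.
Set Implicit Arguments. Unset Strict Implicit. Unset Printing Implicit Defensive.

Inductive form : Type :=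
| Top : form
| Bot : form
| Var : nat -> form
| NVar : nat -> form
| And : form -> form -> form
| Or : form -> form -> form.

Fixpoint vars (f : form) : seq nat :=
  match f with
  | Top | Bot => [::]
  | Var x | NVar x => [:: x]
  | And a b | Or a b => vars a ++ vars b
  end.

Definition linear (f : form) : bool := uniq (vars f).

Definition linear_on (f : form) (V : nat -> Prop) : Prop :=
  linear f /\ forall x, x \in vars f <-> V x.

Fixpoint eval (s : nat -> bool) (f : form) : bool :=
  match f with
  | Top => true
  | Bot => false
  | Var x => s x
  | NVar x => ~~ s x
  | And a b => eval s a && eval s b
  | Or a b => eval s a || eval s b
  end.

Definition linear_inference (phi psi : form) : Prop :=
  linear phi /\ linear psi /\ forall s, eval s phi -> eval s psi.

Fixpoint dual (f : form) : form :=
  match f with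
  | Top => Bot
  | Bot => Top
  | Var x => NVar x
  | NVar x => Var x
  | And a b => Or (dual a) (dual b)
  | Or a b => And (dual a) (dual b)
  end.

Fixpoint subst (sg : nat -> form) (f : form) : form :=
  match f with
  | Top => Top
  | Bot => Bot
  | Var x => sg x
  | NVar x => dual (sg x)
  | And a b => And (subst sg a) (subst sg b)
  | Or a b => Or (subst sg a) (subst sg b)
  end.

Inductive ac_ax : form -> form -> Prop :=
| ac_and_comm a b : ac_ax (And a b) (And b a)
| ac_or_comm a b : ac_ax (Or a b) (Or b a)
| ac_and_assoc a b c : ac_ax (And a (And b c)) (And (And a b) c)
| ac_or_assoc a b c : ac_ax (Or a (Or b c)) (Or (Or a b) c).

Inductive u_ax : form -> form -> Prop :=
| u_andT_r a : u_ax (And a Top) a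
| u_andT_l a : u_ax (And Top a) a
| u_orB_r a : u_ax (Or a Bot) a
| u_orB_l a : u_ax (Or Bot a) a
| u_andB_r a : u_ax (And a Bot) Bot
| u_andB_l a : u_ax (And Bot a) Bot
| u_orT_r a : u_ax (Or a Top) Top
| u_orT_l a : u_ax (Or Top a) Top.

Inductive cong (E : form -> form -> Prop) : form -> form -> Prop :=
| cong_ax a b : E a b -> cong E a b
| cong_refl a : cong E a a
| cong_sym a b : cong E a b -> cong E b a
| cong_trans a b c : cong E a b -> cong E b c -> cong E a c
| cong_and_l a b c : cong E a b -> cong E (And a c) (And b c)
| cong_and_r a b c : cong E a b -> cong E (And c a) (And c b)
| cong_or_l a b c : cong E a b -> cong E (Or a c) (Or b c)
| cong_or_r a b c : cong E a b -> cong E (Or c a) (Or c b).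

Definition ac_eq := cong ac_ax.
Definition u_eq := cong u_ax.
Definition acu_eq := cong (fun a b => ac_ax a b \/ u_ax a b).

Inductive rstep (S : form -> form -> Prop) : form -> form -> Prop :=
| rstep_inst a b sg :
    S a b -> linear (subst sg a) -> linear (subst sg b) ->
    rstep S (subst sg a) (subst sg b)
| rstep_and_l a b c : rstep S a b -> linear (And a c) -> linear (And b c) ->
    rstep S (And a c) (And b c)
| rstep_and_r a b c : rstep S a b -> linear (And c a) -> linear (And c b) ->
    rstep S (And c a) (And c b)
| rstep_or_l a b c : rstep S a b -> linear (Or a c) -> linear (Or b c) ->
    rstep S (Or a c) (Or b c)
| rstep_or_r a b c : rstep S a b -> linear (Or c a) -> linear (Or c b) ->
    rstep S (Or c a) (Or c b).

Definition rstep_u (S : form -> form -> Prop) (phi psi : form) : Prop :=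
  exists phi' psi', acu_eq phi phi' /\ rstep S phi' psi' /\ acu_eq psi' psi.

Definition dstep (S : form -> form -> Prop) (a b : form) : Prop :=
  linear a /\ linear b /\ (rstep_u S a b \/ acu_eq a b).

Inductive rtc (R : form -> form -> Prop) : form -> form -> Prop :=
| rtc_refl a : rtc R a a
| rtc_step a b c : R a b -> rtc R b c -> rtc R a c.

Definition derivable_u (S : form -> form -> Prop) (phi psi : form) : Prop :=
  rtc (dstep S) phi psi.

Definition switch_l : form := And (Var 0) (Or (Var 1) (Var 2)).
Definition switch_r : form := Or (And (Var 0) (Var 1)) (Var 2).
Definition medial_l : form := Or (And (Var 0) (Var 1)) (And (Var 2) (Var 3)).
Definition medial_r : form := And (Or (Var 0) (Var 2)) (Or (Var 1) (Var 3)).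

Definition smr (phi' psi' : form) (a b : form) : Prop :=
  (a = switch_l /\ b = switch_r) \/ (a = medial_l /\ b = medial_r) \/
  (a = phi' /\ b = psi').

From mathcomp Require Import all_boot.
Set Implicit Arguments. Unset Strict Implicit. Unset Printing Implicit Defensive.

(* Take phi' := phi with every literal on a variable not in psi replaced by
   Top, and psi' := psi with every literal on a variable not in phi replaced
   by Bot; both live on the shared variables.  Switch alone, modulo units,
   rewrites any subformula A of a linear formula to Top, and Bot to any A, so
   phi derives phi' and psi' derives psi.  The
   inference phi' -> psi' is valid because linearity lets us change an
   assignment on the discarded variables so that each discarded literal takes
   the value of the unit that replaced it. *)

(* Contexts are stored inside-out: the constructor next to the hole comes first. *)
Inductive ctx := Hole | CAL of ctx & form | CAR of form & ctx
               | COL of ctx & form | COR of form & ctx.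

Fixpoint plug (c : ctx) (g : form) : form :=
  match c with
  | Hole => g
  | CAL c f => plug c (And g f)
  | CAR f c => plug c (And f g)
  | COL c f => plug c (Or g f)
  | COR f c => plug c (Or f g)
  end.

Lemma vars_plug c : exists l r, forall g, vars (plug c g) = l ++ vars g ++ r.
Proof.
elim: c => [|c [l [r IH]] f|f c [l [r IH]]|c [l [r IH]] f|f c [l [r IH]]].
- by exists [::], [::] => g; rewrite cats0.
- by exists l, (vars f ++ r) => g /=; rewrite IH /= -catA.
- by exists (l ++ vars f), r => g /=; rewrite IH /= -!catA.
- by exists l, (vars f ++ r) => g /=; rewrite IH /= -catA.
- by exists (l ++ vars f), r => g /=; rewrite IH /= -!catA.
Qed.

Lemma linear_plug_subseq c a b :
  subseq (vars b) (vars a) -> linear (plug c a) -> linear (plug c b).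
Proof.
have [l [r E]] := vars_plug c; rewrite /linear !E => sba.
by apply: subseq_uniq; rewrite !cat_subseq.
Qed.

Lemma linear_plug_inner c a : linear (plug c a) -> linear a.
Proof.
have [l [r E]] := vars_plug c; rewrite /linear E.
by rewrite !cat_uniq => /and3P[_ _ /and3P[]].
Qed.

Lemma rstep_plug S c a b : rstep S a b ->
  linear (plug c a) -> linear (plug c b) -> rstep S (plug c a) (plug c b).
Proof.
elim: c a b => [//|c IH f|f c IH|c IH f|f c IH] a b ab /= la lb;
  have la' := linear_plug_inner la; have lb' := linear_plug_inner lb; apply: IH la lb.
- exact: rstep_and_l.
- exact: rstep_and_r.
- exact: rstep_or_l.
- exact: rstep_or_r.
Qed.

Lemma acu_plug c a b : acu_eq a b -> acu_eq (plug c a) (plug c b).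
Proof.
elim: c a b => [//|c IH f|f c IH|c IH f|f c IH] a b ab /=; apply: IH.
- exact: cong_and_l.
- exact: cong_and_r.
- exact: cong_or_l.
- exact: cong_or_r.
Qed.

Lemma acu_of_u a b : u_ax a b -> acu_eq a b.
Proof. by move=> ab; apply: cong_ax; right. Qed.

Lemma rtc_trans R a b c : rtc R a b -> rtc R b c -> rtc R a c.
Proof. by elim=> // x y z xy _ IH /IH; apply: rtc_step. Qed.

Lemma dstep_axiom S a b : S a b -> linear a -> linear b -> dstep S a b.
Proof.
have subst_id f : subst Var f = f by elim: f => //= f -> g ->.
move=> ab la lb; do 2!split=> //; left; exists a, b.
split; first exact: cong_refl; split; last exact: cong_refl.
by have := @rstep_inst S a b Var ab; rewrite !subst_id; apply.
Qed.

Definition unit_of (b : bool) : form := if b then Top else Bot.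

Lemma vars_unit_of b : vars (unit_of b) = [::].
Proof. by case: b. Qed.

Fixpoint set_units (b : bool) (P : pred nat) (f : form) : form :=
  match f with
  | Var x | NVar x => if P x then unit_of b else f
  | And f g => And (set_units b P f) (set_units b P g)
  | Or f g => Or (set_units b P f) (set_units b P g)
  | _ => f
  end.

Lemma vars_set_units_subseq b P f : subseq (vars (set_units b P f)) (vars f).
Proof.
elim: f => [||x|x|f IHf g IHg|f IHf g IHg] //; last 2 first.
- exact: cat_subseq IHf IHg.
- exact: cat_subseq IHf IHg.
all: by rewrite [set_units _ _ _]/=; case: (P x); rewrite ?vars_unit_of ?sub0seq ?subseq_refl.
Qed.

Lemma mem_vars_set_units b P f x :
  (x \in vars (set_units b P f)) = (x \in vars f) && ~~ P x.
Proof.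
elim: f => [||y|y|f IHf g IHg|f IHf g IHg] //; last 2 first.
- by rewrite /= !mem_cat IHf IHg andb_orl.
- by rewrite /= !mem_cat IHf IHg andb_orl.
all: rewrite [set_units _ _ _]/= inE; case Py: (P y); rewrite ?vars_unit_of ?inE ?andbT //.
all: by case: eqP => // ->; rewrite Py.
Qed.

Lemma linear_set_units b P f : linear f -> linear (set_units b P f).
Proof. exact/subseq_uniq/vars_set_units_subseq. Qed.

Section Switch.
Variable S : form -> form -> Prop.
Hypothesis S_switch : S switch_l switch_r.

Lemma rstep_switch_plug c x y z : linear (plug c (And x (Or y z))) ->
  rstep S (plug c (And x (Or y z))) (plug c (Or (And x y) z)).
Proof.
move=> lin; have lin' : linear (plug c (Or (And x y) z)).
  by apply: linear_plug_subseq lin; rewrite /= catA.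
apply: (rstep_plug _ lin lin').
pose sg n := nth Top [:: x; y; z] n.
exact: (@rstep_inst S switch_l switch_r sg S_switch
          (linear_plug_inner lin) (linear_plug_inner lin')).
Qed.

(* A ~ A /\ (Top \/ Top) -s-> (A /\ Top) \/ Top ~ Top *)
Lemma dstep_plug_top c a : linear (plug c a) -> dstep S (plug c a) (plug c Top).
Proof.
move=> lin; split=> //; split; first by apply: linear_plug_subseq lin; exact: sub0seq.
left; exists (plug c (And a (Or Top Top))), (plug c (Or (And a Top) Top)).
split; last split.
- apply/acu_plug/cong_sym/(cong_trans (b := And a Top)).
    exact/cong_and_r/acu_of_u/u_orT_r.
  exact/acu_of_u/u_andT_r.
- by apply: rstep_switch_plug; apply: linear_plug_subseq lin; rewrite /= !cats0.
- exact/acu_plug/acu_of_u/u_orT_r.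
Qed.

(* Bot ~ Bot /\ (Bot \/ A) -s-> (Bot /\ Bot) \/ A ~ A *)
Lemma dstep_plug_bot c a : linear (plug c a) -> dstep S (plug c Bot) (plug c a).
Proof.
move=> lin; split; first by apply: linear_plug_subseq lin; exact: sub0seq.
split=> //; left; exists (plug c (And Bot (Or Bot a))), (plug c (Or (And Bot Bot) a)).
split; last split.
- exact/acu_plug/cong_sym/acu_of_u/u_andB_l.
- by apply: rstep_switch_plug; apply: linear_plug_subseq lin.
- apply/acu_plug/(cong_trans (b := Or Bot a)); first exact/cong_or_l/acu_of_u/u_andB_l.
  exact/acu_of_u/u_orB_l.
Qed.

Lemma derivable_set_units_top P f c :
  linear (plug c f) -> derivable_u S (plug c f) (plug c (set_units true P f)).
Proof.
elim: f c => [||x|x|f IHf g IHg|f IHf g IHg] c lin /=; try exact: rtc_refl;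
  try by case: (P x); [exact/rtc_step/rtc_refl/dstep_plug_top|exact: rtc_refl].
- apply: rtc_trans (IHf (CAL c g) lin) (IHg (CAR _ c) _).
  by apply: linear_plug_subseq lin; rewrite /= cat_subseq ?vars_set_units_subseq.
- apply: rtc_trans (IHf (COL c g) lin) (IHg (COR _ c) _).
  by apply: linear_plug_subseq lin; rewrite /= cat_subseq ?vars_set_units_subseq.
Qed.

Lemma derivable_set_units_bot P f c :
  linear (plug c f) -> derivable_u S (plug c (set_units false P f)) (plug c f).
Proof.
elim: f c => [||x|x|f IHf g IHg|f IHf g IHg] c lin /=; try exact: rtc_refl;
  try by case: (P x); [exact/rtc_step/rtc_refl/dstep_plug_bot|exact: rtc_refl].
- have lin' : linear (plug c (And f (set_units false P g))).
    by apply: linear_plug_subseq lin; rewrite /= cat_subseq ?vars_set_units_subseq.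
  exact: rtc_trans (IHf (CAL c _) lin') (IHg (CAR _ c) lin).
- have lin' : linear (plug c (Or f (set_units false P g))).
    by apply: linear_plug_subseq lin; rewrite /= cat_subseq ?vars_set_units_subseq.
  exact: rtc_trans (IHf (COL c _) lin') (IHg (COR _ c) lin).
Qed.

End Switch.

Lemma eval_unit_of s b : eval s (unit_of b) = b.
Proof. by case: b. Qed.

Lemma eq_eval s t f : {in vars f, s =1 t} -> eval s f = eval t f.
Proof.
elim: f => [||x|x|f IHf g IHg|f IHf g IHg] //= st; try by rewrite st ?inE.
all: rewrite IHf ?IHg // => x fx; apply: st; by rewrite mem_cat fx ?orbT.
Qed.

Fixpoint pos_vars (f : form) : seq nat :=
  match f with
  | Var x => [:: x]
  | And f g | Or f g => pos_vars f ++ pos_vars g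
  | _ => [::]
  end.

Lemma pos_vars_sub f : {subset pos_vars f <= vars f}.
Proof.
elim: f => [||x|x|f IHf g IHg|f IHf g IHg] //= y.
all: by rewrite !mem_cat => /orP[/IHf|/IHg] ->; rewrite ?orbT.
Qed.

(* Makes every literal of f on a P-variable evaluate to b; consistent when f
   is linear, since then no variable occurs both positively and negatively. *)
Definition assign_units (b : bool) (P : pred nat) (f : form) (s : nat -> bool) :=
  fun x => if P x then b == (x \in pos_vars f) else s x.

Lemma eval_assign_units b P f s :
  linear f -> eval (assign_units b P f s) f = eval s (set_units b P f).
Proof.
elim: f => [||x|x|f IHf g IHg|f IHf g IHg] //.
- by rewrite /= /assign_units; case: (P x); rewrite ?eval_unit_of ?inE ?eqxx ?eqb_id.
- by rewrite /= /assign_units; case: (P x); rewrite ?eval_unit_of ?eqbF_neg ?negbK.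
all: rewrite /linear [vars _]/= cat_uniq has_sym => /and3P[lf /hasPn fg lg] /=.
all: have disj x : x \in vars f -> x \in vars g -> False by move=> /fg /negP.
all: have pos_f x : x \in vars g -> x \in pos_vars f = false
       by move=> xg; apply/negP => /pos_vars_sub /disj; apply.
all: have pos_g x : x \in vars f -> x \in pos_vars g = false
       by move=> xf; apply/negP => /pos_vars_sub; apply: disj.
all: rewrite -IHf // -IHg //; congr (_ _ _); apply: eq_eval => x x_fg.
all: rewrite /assign_units [pos_vars _]/= mem_cat.
all: first [by rewrite pos_g ?orbF | by rewrite pos_f].
Qed.

Lemma set_units_inference phi psi :
  linear phi -> linear psi -> (forall s, eval s phi -> eval s psi) ->
  forall s, eval s (set_units true [pred x | x \notin vars psi] phi) ->
            eval s (set_units false [pred x | x \notin vars phi] psi).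
Proof.
move=> lphi lpsi phi_psi s.
set t1 := assign_units true [pred x | x \notin vars psi] phi s.
set t2 := assign_units false [pred x | x \notin vars phi] psi t1.
have t2_phi : {in vars phi, t2 =1 t1} by move=> x phi_x; rewrite /t2 /assign_units /= phi_x.
have t1_psi' : {in vars (set_units false [pred x | x \notin vars phi] psi), t1 =1 s}.
  by move=> x; rewrite mem_vars_set_units /t1 /assign_units /= => /andP[-> _].
rewrite -(eq_eval t1_psi') -eval_assign_units // -eval_assign_units // -/t1 -/t2.
by rewrite -(eq_eval t2_phi); apply: phi_psi.
Qed.

Lemma linear_on_set_units b f g V W U :
  linear_on f V -> linear_on g W -> (forall x, U x <-> V x /\ W x) ->
  linear_on (set_units b [pred x | x \notin vars g] f) U.
Proof.
move=> [lf fV] [_ gW] UVW; split; first exact: linear_set_units.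
move=> x; rewrite mem_vars_set_units /= negbK.
by split=> [/andP[/fV Vx /gW Wx]|/UVW[/fV -> /gW ->]]; first exact/UVW.
Qed.

Theorem proposition2p14 (phi psi : form) (V1 V2 : nat -> Prop) :
  linear_on phi V1 -> linear_on psi V2 -> linear_inference phi psi ->
  exists phi' psi' : form,
    linear_on phi' (fun x => V1 x /\ V2 x) /\
    linear_on psi' (fun x => V1 x /\ V2 x) /\
    linear_inference phi' psi' /\
    derivable_u (smr phi' psi') phi psi.
Proof.
move=> phiV psiV [lphi [lpsi phi_psi]].
set phi' := set_units true [pred x | x \notin vars psi] phi.
set psi' := set_units false [pred x | x \notin vars phi] psi.
have lphi' : linear phi' := linear_set_units _ _ lphi.
have lpsi' : linear psi' := linear_set_units _ _ lpsi.
have S_switch : smr phi' psi' switch_l switch_r by left.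
exists phi', psi'; split; first exact: linear_on_set_units phiV psiV _.
split; first by apply: linear_on_set_units psiV phiV _ => x; exact: and_comm.
split; first by split=> //; split=> //; apply: set_units_inference.
apply: rtc_trans (derivable_set_units_top S_switch _ (c := Hole) lphi) _.
apply: rtc_step (derivable_set_units_bot S_switch _ (c := Hole) lpsi).
by apply: dstep_axiom lphi' lpsi'; do 2!right.
Qed.
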